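(* Let $P$ be a continuous $L$-ordered set. Then $\Sigma_LP=(P,\sigma_L(P))$ is a locally super-compact $L$-topological space. Consequently, if $P$ is moreover an $L$-dcpo, then $\Sigma_LP$ is a locally super-compact $L$-sober space.
   Context: $L$ is a frame with implication $\to$. $L$-subsets of $X$: maps $X\to L$; nonempty: $\bigvee_xA(x)=1$; ${\rm sub}_X(A,B)=\bigwedge_xA(x)\to B(x)$. $L$-topology: $\mathcal O(X)\subseteq L^X$ closed under finite meets, arbitrary joins, containing constants; interior $A^\circ=\bigvee\{B\text{ open}:B\le A\}$. Super-compact: nonempty $A$ with ${\rm sub}_X(A,\bigvee_iV_i)=\bigvee_i{\rm sub}_X(A,V_i)$ for every family of open $V_i$; ${\rm SC}(X)$ is their set. Locally super-compact: every open $A$ equals $\bigvee_{B\in{\rm SC}(X)}{\rm sub}_X(B,A)\wedge B^\circ$. A point of $\mathcal O(X)$: $p:\mathcal O(X)\to L$ preserving binary meets and arbitrary joins with $p(\lambda_X)=\lambda$; $[x](A)=A(x)$; $L$-sober: $x\mapsto[x]$ bijective onto the points. $L$-order on $P$: $e$ with $e(x,x)=1$, $e(x,y)\wedge e(y,z)\le e(x,z)$, $e(x,y)\wedge e(y,x)=1\Rightarrow x=y$. ${\downarrow}y(x)=e(x,y)$. $\sqcup A=x$ iff $e(x,y)={\rm sub}_P(A,{\downarrow}y)$ for all $y$. Directed: nonempty and $D(x)\wedge D(y)\le\bigvee_zD(z)\wedge e(x,z)\wedge e(y,z)$; ideal: directed lower set. $L$-dcpo: all directed $L$-subsets have suprema.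 ${\Downarrow}x(y)=\bigwedge\{e(x,\sqcup I)\to I(y):I\text{ ideal with a supremum}\}$; $P$ continuous if each ${\Downarrow}x$ is directed with supremum $x$. $\sigma_L(P)$: upper sets $A$ with $A(\sqcup D)=\bigvee_xA(x)\wedge D(x)$ for all directed $D$ having a supremum. *)

Set Implicit Arguments.
Unset Strict Implicit.

Record frame := Frame {
  fcar :> Type;
  fle : fcar -> fcar -> Prop;
  fle_refl : forall a, fle a a;
  fle_trans : forall a b c, fle a b -> fle b c -> fle a c;
  fle_antisym : forall a b, fle a b -> fle b a -> a = b;
  fsup : (fcar -> Prop) -> fcar;
  fsup_ub : forall (S : fcar -> Prop) a, S a -> fle a (fsup S);
  fsup_least : forall (S : fcar -> Prop) b, (forall a, S a -> fle a b) -> fle (fsup S) b;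
  finf : (fcar -> Prop) -> fcar;
  finf_lb : forall (S : fcar -> Prop) a, S a -> fle (finf S) a;
  finf_greatest : forall (S : fcar -> Prop) b, (forall a, S a -> fle b a) -> fle b (finf S);
  fmeet : fcar -> fcar -> fcar;
  fmeet_l : forall a b, fle (fmeet a b) a;
  fmeet_r : forall a b, fle (fmeet a b) b;
  fmeet_greatest : forall a b c, fle c a -> fle c b -> fle c (fmeet a b);
  fimp : fcar -> fcar -> fcar;
  fimp_adj : forall a b c, fle (fmeet a b) c <-> fle a (fimp b c)
}.

Arguments fle {L} : rename.
Arguments fsup {L} : rename.
Arguments finf {L} : rename.
Arguments fmeet {L} : rename.
Arguments fimp {L} : rename.

Section Defs.
Variable L : frame.

Definition ftop : L := finf (fun _ => False).

Definition isup (I : Type) (f : I -> L) : L := fsup (fun a => exists i, a = f i).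
Definition iinf (I : Type) (f : I -> L) : L := finf (fun a => exists i, a = f i).

Definition Lset (X : Type) := X -> L.

Definition Lnonempty (X : Type) (A : Lset X) : Prop := isup A = ftop.

Definition sub (X : Type) (A B : Lset X) : L := iinf (fun x => fimp (A x) (B x)).

Definition Lconst (X : Type) (l : L) : Lset X := fun _ => l.

Definition Lsubset (X : Type) (A B : Lset X) : Prop := forall x, fle (A x) (B x).

Definition Ljoin (X : Type) (F : Lset X -> Prop) : Lset X :=
  fun x => fsup (fun a => exists B, F B /\ a = B x).

Definition is_Ltopology (X : Type) (O : Lset X -> Prop) : Prop :=
  (forall A B, O A -> O B -> O (fun x => fmeet (A x) (B x))) /\
  (forall F : Lset X -> Prop, (forall B, F B -> O B) -> O (Ljoin F)) /\
  (forall l : L, O (@Lconst X l)).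

Definition interior (X : Type) (O : Lset X -> Prop) (A : Lset X) : Lset X :=
  Ljoin (fun B => O B /\ Lsubset B A).

Definition super_compact (X : Type) (O : Lset X -> Prop) (A : Lset X) : Prop :=
  Lnonempty A /\
  forall (I : Type) (V : I -> Lset X), (forall i, O (V i)) ->
    sub A (fun x => isup (fun i => V i x)) = isup (fun i => sub A (V i)).

Definition locally_super_compact (X : Type) (O : Lset X -> Prop) : Prop :=
  forall A, O A ->
    A = (fun x => fsup (fun a => exists B, super_compact O B /\
                                   a = fmeet (sub B A) (interior O B x))).

(** points of O(X): maps O(X) -> L, represented as maps on all L-subsets,
    of which only the values on open sets matter *)
Definition is_point (X : Type) (O : Lset X -> Prop) (p : Lset X -> L) : Prop :=
  (forall A B, O A -> O B -> p (fun x => fmeet (A x) (B x)) = fmeet (p A) (p B)) /\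
  (forall F : Lset X -> Prop, (forall B, F B -> O B) ->
      p (Ljoin F) = fsup (fun a => exists B, F B /\ a = p B)) /\
  (forall l : L, p (@Lconst X l) = l).

Definition pt_of (X : Type) (x : X) : Lset X -> L := fun A => A x.

Definition eq_on_opens (X : Type) (O : Lset X -> Prop) (p q : Lset X -> L) : Prop :=
  forall A, O A -> p A = q A.

Definition Lsober (X : Type) (O : Lset X -> Prop) : Prop :=
  (forall x y : X, eq_on_opens O (pt_of x) (pt_of y) -> x = y) /\
  (forall p, is_point O p -> exists x, eq_on_opens O p (pt_of x)).

Definition Lorder (P : Type) (e : P -> P -> L) : Prop :=
  (forall x, e x x = ftop) /\
  (forall x y z, fle (fmeet (e x y) (e y z)) (e x z)) /\
  (forall x y, fmeet (e x y) (e y x) = ftop -> x = y).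

Definition down (P : Type) (e : P -> P -> L) (y : P) : Lset P := fun x => e x y.

Definition is_Lsup (P : Type) (e : P -> P -> L) (A : Lset P) (x : P) : Prop :=
  forall y, e x y = sub A (down e y).

Definition directed (P : Type) (e : P -> P -> L) (D : Lset P) : Prop :=
  Lnonempty D /\
  forall x y, fle (fmeet (D x) (D y))
                  (isup (fun z => fmeet (D z) (fmeet (e x z) (e y z)))).

Definition lower_set (P : Type) (e : P -> P -> L) (A : Lset P) : Prop :=
  forall x y, fle (fmeet (A y) (e x y)) (A x).

Definition upper_set (P : Type) (e : P -> P -> L) (A : Lset P) : Prop :=
  forall x y, fle (fmeet (A x) (e x y)) (A y).

Definition ideal (P : Type) (e : P -> P -> L) (I : Lset P) : Prop :=
  directed e I /\ lower_set e I.

Definition Ldcpo (P : Type) (e : P -> P -> L) : Prop :=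
  forall D, directed e D -> exists s, is_Lsup e D s.

Definition waybelow (P : Type) (e : P -> P -> L) (x : P) : Lset P :=
  fun y => finf (fun a => exists I s, ideal e I /\ is_Lsup e I s /\
                                       a = fimp (e x s) (I y)).

Definition Lcontinuous (P : Type) (e : P -> P -> L) : Prop :=
  forall x, directed e (waybelow e x) /\ is_Lsup e (waybelow e x) x.

Definition sigmaL (P : Type) (e : P -> P -> L) (A : Lset P) : Prop :=
  upper_set e A /\
  forall D s, directed e D -> is_Lsup e D s ->
    A s = isup (fun x => fmeet (A x) (D x)).

End Defs.

(* Continuity gives interpolation for the way-below relation: ⇓s(x) ≤ ⋁_z ⇓s(z) ∧ ⇓z(x),
   because the right-hand side is an ideal with supremum s. Interpolation makes every
   way-above set ⇑x = ⇓(-)(x) Scott open, and continuity decomposes each Scott open A as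
   A(y) = ⋁_x A(x) ∧ ⇓y(x). Since sub(↑x, V) = V(x) for upper V, the principal filters ↑x
   are super-compact, and ⇑x lies below their interior; this gives local super-compactness.
   For sobriety, a point p induces the directed L-subset x ↦ p(⇑x); its supremum x₀ in the
   dcpo satisfies p(A) = ⋁_x A(x) ∧ p(⇑x) = A(x₀) for every Scott open A. *)

From Stdlib Require Import FunctionalExtensionality.

Set Implicit Arguments.

Local Notation "a ⊑ b" := (fle a b) (at level 70).
Local Notation "a ⊓ b" := (fmeet a b) (at level 40, left associativity).
Local Notation top := (ftop _).

Section FrameTheory.
Context {L : frame}.

Lemma fmeet_le_l (a b c : L) : a ⊑ c -> a ⊓ b ⊑ c.
Proof. intros; eapply fle_trans; [apply fmeet_l | assumption]. Qed.

Lemma fmeet_le_r (a b c : L) : b ⊑ c -> a ⊓ b ⊑ c.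
Proof. intros; eapply fle_trans; [apply fmeet_r | assumption]. Qed.

Lemma fmeet_mono (a b a' b' : L) : a ⊑ a' -> b ⊑ b' -> a ⊓ b ⊑ a' ⊓ b'.
Proof. intros; apply fmeet_greatest; [apply fmeet_le_l | apply fmeet_le_r]; assumption. Qed.

Lemma fmeetC (a b : L) : a ⊓ b = b ⊓ a.
Proof. apply fle_antisym; apply fmeet_greatest; auto using fmeet_l, fmeet_r. Qed.

Lemma ftop_greatest (a : L) : a ⊑ top.
Proof. apply finf_greatest; intros _ []. Qed.

Lemma ftop_le_eq (a : L) : top ⊑ a -> a = top.
Proof. intros; apply fle_antisym; [apply ftop_greatest | assumption]. Qed.

Lemma fmeet_top_l (a : L) : top ⊓ a = a.
Proof.
  apply fle_antisym; [apply fmeet_r |].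
  apply fmeet_greatest; [apply ftop_greatest | apply fle_refl].
Qed.

Lemma fmeet_top_r (a : L) : a ⊓ top = a.
Proof. rewrite fmeetC; apply fmeet_top_l. Qed.

Lemma le_fimp (a b c : L) : a ⊓ b ⊑ c -> a ⊑ fimp b c.
Proof. apply fimp_adj. Qed.

Lemma fimp_le (a b c : L) : a ⊑ fimp b c -> a ⊓ b ⊑ c.
Proof. apply fimp_adj. Qed.

Lemma le_isup I (f : I -> L) i a : a ⊑ f i -> a ⊑ isup f.
Proof. intros; eapply fle_trans; [eassumption | apply fsup_ub; exists i; reflexivity]. Qed.

Lemma isup_least I (f : I -> L) b : (forall i, f i ⊑ b) -> isup f ⊑ b.
Proof. intros H; apply fsup_least; intros a [i ->]; apply H. Qed.

Lemma isup_mono I (f g : I -> L) : (forall i, f i ⊑ g i) -> isup f ⊑ isup g.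
Proof. intros H; apply isup_least; intros i; apply le_isup with i, H. Qed.

(* Infinite distributivity, from the Heyting adjunction. *)
Lemma isup_meet_le I (f : I -> L) c b : (forall i, f i ⊓ c ⊑ b) -> isup f ⊓ c ⊑ b.
Proof. intros H; apply fimp_le, isup_least; intros i; apply le_fimp, H. Qed.

Lemma meet_isup_le I (f : I -> L) c b : (forall i, c ⊓ f i ⊑ b) -> c ⊓ isup f ⊑ b.
Proof. intros H; rewrite fmeetC; apply isup_meet_le; intros i; rewrite fmeetC; apply H. Qed.

Lemma iinf_lb I (f : I -> L) i : iinf f ⊑ f i.
Proof. apply finf_lb; exists i; reflexivity. Qed.

Lemma iinf_greatest I (f : I -> L) b : (forall i, b ⊑ f i) -> b ⊑ iinf f.
Proof. intros H; apply finf_greatest; intros a [i ->]; apply H. Qed.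

Lemma sub_meet_le X (A B : Lset L X) x : sub A B ⊓ A x ⊑ B x.
Proof. apply fimp_le, (iinf_lb (fun x => fimp (A x) (B x)) x). Qed.

Lemma sub_greatest X (A B : Lset L X) c : (forall x, c ⊓ A x ⊑ B x) -> c ⊑ sub A B.
Proof. intros H; apply iinf_greatest; intros x; apply le_fimp, H. Qed.

Lemma Ljoin_ub X (F : Lset L X -> Prop) B x : F B -> B x ⊑ Ljoin F x.
Proof. intros; apply fsup_ub; exists B; auto. Qed.

Lemma Ljoin_least X (F : Lset L X -> Prop) x b : (forall B, F B -> B x ⊑ b) -> Ljoin F x ⊑ b.
Proof. intros H; apply fsup_least; intros a [B [HB ->]]; apply H, HB. Qed.

Lemma Ljoin_meet_le X (F : Lset L X -> Prop) x c b :
  (forall B, F B -> B x ⊓ c ⊑ b) -> Ljoin F x ⊓ c ⊑ b.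
Proof. intros H; apply fimp_le, Ljoin_least; intros B HB; apply le_fimp, H, HB. Qed.

Lemma Ljoin_range X I (G : I -> Lset L X) :
  Ljoin (fun B => exists i, B = G i) = fun x => isup (fun i => G i x).
Proof.
  apply functional_extensionality; intros x; apply fle_antisym.
  - apply Ljoin_least; intros B [i ->]; apply le_isup with i, fle_refl.
  - apply isup_least; intros i; apply Ljoin_ub; exists i; reflexivity.
Qed.

Lemma interior_le X (O : Lset L X -> Prop) (A : Lset L X) x : interior O A x ⊑ A x.
Proof. apply Ljoin_least; intros B [_ HB]; apply HB. Qed.

End FrameTheory.

(* [via H] proves [a ⊑ b] from [H : c ⊑ b] when [c] is a meet of meet-projections of [a]. *)
Ltac meet_proj :=
  first [ apply fle_refl | apply ftop_greatest
        | apply fmeet_le_l; meet_proj | apply fmeet_le_r; meet_proj ].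
Ltac solve_meet := repeat apply fmeet_greatest; meet_proj.
Ltac via H := eapply fle_trans; [| apply H]; solve_meet.

Section Points.
Context {L : frame} {X : Type}.
Variables (O : Lset L X -> Prop) (p : Lset L X -> L).
Hypothesis p_point : is_point O p.

Lemma point_mono A B : O A -> O B -> Lsubset A B -> p A ⊑ p B.
Proof.
  intros HA HB AB.
  assert (E : (fun x => A x ⊓ B x) = A).
  { apply functional_extensionality; intros x.
    apply fle_antisym; [apply fmeet_l | apply fmeet_greatest; [apply fle_refl | apply AB]]. }
  rewrite <- E, (proj1 p_point A B HA HB). apply fmeet_r.
Qed.

Lemma point_isup I (G : I -> Lset L X) :
  (forall i, O (G i)) -> p (fun x => isup (fun i => G i x)) = isup (fun i => p (G i)).
Proof.
  intros HG. rewrite <- Ljoin_range, (proj1 (proj2 p_point)) by (intros B [i ->]; apply HG).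
  apply fle_antisym.
  - apply fsup_least; intros a [B [[i ->] ->]]. apply le_isup with i, fle_refl.
  - apply isup_least; intros i. apply fsup_ub. exists (G i). split; [exists i |]; reflexivity.
Qed.

Lemma point_const_meet c U : O (Lconst c) -> O U -> p (fun x => c ⊓ U x) = c ⊓ p U.
Proof.
  intros Hc HU. transitivity (p (Lconst c) ⊓ p U).
  - exact (proj1 p_point _ _ Hc HU).
  - rewrite (proj2 (proj2 p_point) c). reflexivity.
Qed.

End Points.

Section LOrder.
Context {L : frame} {P : Type}.
Variable e : P -> P -> L.
Hypothesis e_order : Lorder e.
Local Notation wb := (waybelow e).

Lemma Lorder_refl x : e x x = top.
Proof. apply e_order. Qed.

Lemma Lorder_trans x y z : e x y ⊓ e y z ⊑ e x z.
Proof. apply e_order. Qed.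

Lemma down_ideal y : ideal e (down e y).
Proof.
  split; [split |].
  - apply ftop_le_eq, le_isup with y. unfold down; rewrite Lorder_refl; apply fle_refl.
  - intros a b. apply le_isup with y. unfold down; rewrite Lorder_refl, fmeet_top_l.
    apply fle_refl.
  - intros a b. unfold down; rewrite fmeetC. apply Lorder_trans.
Qed.

Lemma down_Lsup y : is_Lsup e (down e y) y.
Proof.
  intros z; apply fle_antisym.
  - apply sub_greatest; intros x. unfold down; rewrite fmeetC. apply Lorder_trans.
  - eapply fle_trans; [| apply (sub_meet_le (down e y) (down e z) y)].
    unfold down; rewrite Lorder_refl, fmeet_top_r. apply fle_refl.
Qed.

Lemma Lsup_ub D s : is_Lsup e D s -> forall x, D x ⊑ e x s.
Proof.
  intros Hs x. eapply fle_trans; [| apply (sub_meet_le D (down e s) x)].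
  rewrite <- Hs, Lorder_refl, fmeet_top_l. apply fle_refl.
Qed.

Lemma Lsup_unique D s t : is_Lsup e D s -> is_Lsup e D t -> s = t.
Proof.
  intros Hs Ht. apply e_order.
  rewrite (Hs t), (Ht s), <- (Ht t), <- (Hs s), !Lorder_refl. apply fmeet_top_l.
Qed.

Lemma upper_set_meet A B :
  upper_set e A -> upper_set e B -> upper_set e (fun x => A x ⊓ B x).
Proof. intros HA HB x y. apply fmeet_greatest; [via (HA x y) | via (HB x y)]. Qed.

Lemma upper_set_isup_le A D s :
  upper_set e A -> is_Lsup e D s -> isup (fun x => A x ⊓ D x) ⊑ A s.
Proof.
  intros HA Hs. apply isup_least; intros x.
  apply fle_trans with (A x ⊓ e x s); [| apply HA].
  apply fmeet_mono; [apply fle_refl | apply (Lsup_ub Hs)].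
Qed.

Definition lower_closure (D : Lset L P) : Lset L P :=
  fun w => isup (fun y => D y ⊓ e w y).

Lemma le_lower_closure D x : D x ⊑ lower_closure D x.
Proof. apply le_isup with x. rewrite Lorder_refl, fmeet_top_r. apply fle_refl. Qed.

Lemma directed_lower_closure_ideal D : directed e D -> ideal e (lower_closure D).
Proof.
  intros [D_ne D_dir]. split; [split |].
  - apply ftop_le_eq. rewrite <- D_ne. apply isup_mono, le_lower_closure.
  - intros a b. unfold lower_closure at 1 2.
    apply isup_meet_le; intros y. apply meet_isup_le; intros y'.
    apply fle_trans with (isup (fun z => D z ⊓ (e y z ⊓ e y' z)) ⊓ (e a y ⊓ e b y')).
    { apply fmeet_greatest; [via (D_dir y y') | solve_meet]. }
    apply isup_meet_le; intros z. apply le_isup with z.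
    apply fmeet_greatest; [| apply fmeet_greatest].
    + via (le_lower_closure D z).
    + via (Lorder_trans a y z).
    + via (Lorder_trans b y' z).
  - intros x y. unfold lower_closure.
    apply isup_meet_le; intros z. apply le_isup with z.
    apply fmeet_greatest; [solve_meet | via (Lorder_trans x y z)].
Qed.

Lemma lower_closure_Lsup D s : is_Lsup e D s -> is_Lsup e (lower_closure D) s.
Proof.
  intros Hs t. rewrite (Hs t). apply fle_antisym.
  - apply sub_greatest; intros x. unfold lower_closure. apply meet_isup_le; intros y.
    apply fle_trans with (e x y ⊓ e y t); [| apply Lorder_trans].
    apply fmeet_greatest; [solve_meet | via (sub_meet_le D (down e t) y)].
  - apply sub_greatest; intros x.
    eapply fle_trans; [| apply (sub_meet_le (lower_closure D) (down e t) x)].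
    apply fmeet_greatest; [solve_meet | via (le_lower_closure D x)].
Qed.

Lemma waybelow_meet_le_ideal I s z x :
  ideal e I -> is_Lsup e I s -> wb z x ⊓ e z s ⊑ I x.
Proof. intros HI Hs. apply fimp_le, finf_lb. exists I, s. auto. Qed.

Lemma waybelow_le_ideal I s x : ideal e I -> is_Lsup e I s -> wb s x ⊑ I x.
Proof.
  intros HI Hs. rewrite <- (fmeet_top_r (wb s x)), <- (Lorder_refl s).
  apply waybelow_meet_le_ideal; assumption.
Qed.

Lemma waybelow_le y x : wb y x ⊑ e x y.
Proof. exact (waybelow_le_ideal x (down_ideal y) (down_Lsup y)). Qed.

Lemma waybelow_le_directed D s z :
  directed e D -> is_Lsup e D s -> wb s z ⊑ lower_closure D z.
Proof.
  intros HD Hs.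
  exact (waybelow_le_ideal z (directed_lower_closure_ideal HD) (lower_closure_Lsup Hs)).
Qed.

Lemma waybelow_lower z x y : wb z y ⊓ e x y ⊑ wb z x.
Proof.
  unfold waybelow at 2. apply finf_greatest. intros a [I [s [HI [Hs ->]]]].
  apply le_fimp. apply fle_trans with (I y ⊓ e x y); [| apply (proj2 HI)].
  apply fmeet_greatest; [via (waybelow_meet_le_ideal z y HI Hs) | solve_meet].
Qed.

Lemma waybelow_upper x y y' : wb y x ⊓ e y y' ⊑ wb y' x.
Proof.
  unfold waybelow at 2. apply finf_greatest. intros a [I [s [HI [Hs ->]]]].
  apply le_fimp. apply fle_trans with (wb y x ⊓ e y s);
    [| apply (waybelow_meet_le_ideal y x HI Hs)].
  apply fmeet_greatest; [solve_meet | via (Lorder_trans y y' s)].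
Qed.

End LOrder.

Section ScottTopology.
Context {L : frame} {P : Type}.
Variable e : P -> P -> L.
Hypothesis e_order : Lorder e.

Lemma sigmaL_intro A :
  upper_set e A ->
  (forall D s, directed e D -> is_Lsup e D s -> A s ⊑ isup (fun x => A x ⊓ D x)) ->
  sigmaL e A.
Proof.
  intros HA Hle. split; [exact HA |].
  intros D s HD Hs. apply fle_antisym; [apply Hle; assumption |].
  exact (upper_set_isup_le e_order HA Hs).
Qed.

Lemma sigmaL_meet A B : sigmaL e A -> sigmaL e B -> sigmaL e (fun x => A x ⊓ B x).
Proof.
  intros [HA_up HA] [HB_up HB]. apply sigmaL_intro; [apply upper_set_meet; assumption |].
  intros D s HD Hs. rewrite (HA D s HD Hs), (HB D s HD Hs).
  apply isup_meet_le; intros x. apply meet_isup_le; intros y.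
  apply fle_trans with (isup (fun z => D z ⊓ (e x z ⊓ e y z)) ⊓ (A x ⊓ B y)).
  { apply fmeet_greatest; [via (proj2 HD x y) | solve_meet]. }
  apply isup_meet_le; intros z. apply le_isup with z.
  apply fmeet_greatest; [apply fmeet_greatest | solve_meet].
  - via (HA_up x z).
  - via (HB_up y z).
Qed.

Lemma sigmaL_Ljoin F : (forall B, F B -> sigmaL e B) -> sigmaL e (Ljoin F).
Proof.
  intros HF. apply sigmaL_intro.
  - intros x y. apply Ljoin_meet_le; intros B HB.
    apply fle_trans with (B y); [apply (proj1 (HF B HB)) | apply (Ljoin_ub _ _ _ HB)].
  - intros D s HD Hs. apply Ljoin_least; intros B HB. rewrite (proj2 (HF B HB) D s HD Hs).
    apply isup_mono; intros x. apply fmeet_mono; [apply (Ljoin_ub _ _ _ HB) | apply fle_refl].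
Qed.

Lemma sigmaL_isup I (G : I -> Lset L P) :
  (forall i, sigmaL e (G i)) -> sigmaL e (fun x => isup (fun i => G i x)).
Proof. intros HG. rewrite <- Ljoin_range. apply sigmaL_Ljoin. intros B [i ->]; apply HG. Qed.

Lemma sigmaL_const l : sigmaL e (Lconst l).
Proof.
  apply sigmaL_intro.
  - intros x y. apply fmeet_l.
  - intros D s HD Hs. unfold Lconst.
    apply fle_trans with (l ⊓ isup D).
    { apply fmeet_greatest; [apply fle_refl | rewrite (proj1 HD); apply ftop_greatest]. }
    apply meet_isup_le; intros x. apply le_isup with x, fle_refl.
Qed.

Lemma sigmaL_meet_const c A : sigmaL e A -> sigmaL e (fun x => c ⊓ A x).
Proof. exact (sigmaL_meet (sigmaL_const c)). Qed.

Lemma sigmaL_Ltopology : is_Ltopology (sigmaL e).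
Proof. split; [| split]; [exact sigmaL_meet | exact sigmaL_Ljoin | exact sigmaL_const]. Qed.

Definition up (x : P) : Lset L P := fun y => e x y.

Lemma sub_up x V : upper_set e V -> sub (up x) V = V x.
Proof.
  intros HV. apply fle_antisym.
  - apply fle_trans with (sub (up x) V ⊓ up x x); [| apply sub_meet_le].
    unfold up; rewrite (Lorder_refl e_order), fmeet_top_r. apply fle_refl.
  - apply sub_greatest; intros y. apply HV.
Qed.

Lemma up_super_compact x : super_compact (sigmaL e) (up x).
Proof.
  split.
  - apply ftop_le_eq, le_isup with x. unfold up; rewrite (Lorder_refl e_order). apply fle_refl.
  - intros I V HV. rewrite sub_up.
    + f_equal. apply functional_extensionality; intros i.
      rewrite sub_up; [reflexivity | apply HV].
    + intros y y'. apply isup_meet_le; intros i. apply le_isup with i. apply (proj1 (HV i)).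
Qed.

End ScottTopology.

Section ContinuousScottTopology.
Context {L : frame} {P : Type}.
Variable e : P -> P -> L.
Hypotheses (e_order : Lorder e) (e_continuous : Lcontinuous e).
Local Notation wb := (waybelow e).

Lemma waybelow_directed x : directed e (wb x).
Proof. apply e_continuous. Qed.

Lemma waybelow_Lsup x : is_Lsup e (wb x) x.
Proof. apply e_continuous. Qed.

Lemma waybelow_nonempty x : isup (wb x) = top.
Proof. apply waybelow_directed. Qed.

Definition interpolant (s x : P) : L := isup (fun z => wb s z ⊓ wb z x).

Lemma interpolant_nonempty s : Lnonempty (interpolant s).
Proof.
  apply ftop_le_eq. rewrite <- (waybelow_nonempty s). apply isup_least; intros z.
  rewrite <- (fmeet_top_r (wb s z)), <- (waybelow_nonempty z).
  apply meet_isup_le; intros x. apply le_isup with x. apply le_isup with z, fle_refl.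
Qed.

Lemma interpolant_directed s a b :
  interpolant s a ⊓ interpolant s b
  ⊑ isup (fun w => interpolant s w ⊓ (e a w ⊓ e b w)).
Proof.
  unfold interpolant at 1 2. apply isup_meet_le; intros z. apply meet_isup_le; intros z'.
  apply fle_trans with (isup (fun w => wb s w ⊓ (wb w a ⊓ wb w b))).
  - apply fle_trans with (isup (fun w => wb s w ⊓ (e z w ⊓ e z' w)) ⊓ (wb z a ⊓ wb z' b)).
    { apply fmeet_greatest; [via (proj2 (waybelow_directed s) z z') | solve_meet]. }
    apply isup_meet_le; intros w. apply le_isup with w.
    apply fmeet_greatest; [solve_meet | apply fmeet_greatest].
    + via (waybelow_upper e_order a z w).
    + via (waybelow_upper e_order b z' w).
  - apply isup_least; intros w.
    apply fle_trans with (wb s w ⊓ isup (fun v => wb w v ⊓ (e a v ⊓ e b v))).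
    { apply fmeet_mono; [apply fle_refl | apply (proj2 (waybelow_directed w))]. }
    apply meet_isup_le; intros v. apply le_isup with v.
    apply fmeet_greatest; [| solve_meet]. apply le_isup with w. solve_meet.
Qed.

Lemma interpolant_lower s : lower_set e (interpolant s).
Proof.
  intros x y. apply isup_meet_le; intros z. apply le_isup with z.
  apply fmeet_greatest; [solve_meet | via (waybelow_lower e z x y)].
Qed.

Lemma interpolant_Lsup s : is_Lsup e (interpolant s) s.
Proof.
  intros t. rewrite (waybelow_Lsup s t). apply fle_antisym.
  - apply sub_greatest; intros x. apply meet_isup_le; intros z.
    apply fle_trans with (e x z ⊓ e z t); [| apply (Lorder_trans e_order)].
    apply fmeet_greatest;
      [via (waybelow_le e_order z x) | via (sub_meet_le (wb s) (down e t) z)].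
  - apply sub_greatest; intros z. unfold down at 2. rewrite (waybelow_Lsup z t).
    apply sub_greatest; intros x.
    apply fle_trans with (sub (interpolant s) (down e t) ⊓ interpolant s x);
      [| apply sub_meet_le].
    apply fmeet_greatest; [solve_meet | apply le_isup with z; solve_meet].
Qed.

Lemma waybelow_interpolation s x : wb s x ⊑ interpolant s x.
Proof.
  apply (waybelow_le_ideal e_order).
  - split; [split |]; [apply interpolant_nonempty | apply interpolant_directed
                      | apply interpolant_lower].
  - apply interpolant_Lsup.
Qed.

Definition wayabove (x : P) : Lset L P := fun y => wb y x.

Lemma wayabove_open x : sigmaL e (wayabove x).
Proof.
  apply (sigmaL_intro e_order); [intros y y'; apply (waybelow_upper e_order) |].
  intros D s HD Hs. eapply fle_trans; [apply waybelow_interpolation |].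
  apply isup_least; intros z.
  apply fle_trans with (lower_closure e D z ⊓ wb z x).
  { apply fmeet_mono; [apply (waybelow_le_directed e_order z HD Hs) | apply fle_refl]. }
  apply isup_meet_le; intros y. apply le_isup with y.
  apply fmeet_greatest; [via (waybelow_upper e_order x z y) | solve_meet].
Qed.

Lemma sigmaL_waybelow_join (c : P -> L) : sigmaL e (fun y => isup (fun x => c x ⊓ wb y x)).
Proof.
  apply (sigmaL_isup e_order); intros x. apply (sigmaL_meet_const e_order), wayabove_open.
Qed.

Lemma sigmaL_waybelow_decomp A y : sigmaL e A -> A y = isup (fun x => A x ⊓ wb y x).
Proof. intros HA. apply HA; [apply waybelow_directed | apply waybelow_Lsup]. Qed.

Lemma wayabove_le_interior_up x y : wb y x ⊑ interior (sigmaL e) (up e x) y.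
Proof.
  apply Ljoin_ub with (B := wayabove x). split; [apply wayabove_open |].
  intros z. apply (waybelow_le e_order).
Qed.

Lemma sigmaL_locally_super_compact : locally_super_compact (sigmaL e).
Proof.
  intros A HA. apply functional_extensionality; intros y. apply fle_antisym.
  - rewrite (sigmaL_waybelow_decomp y HA). apply isup_least; intros x.
    apply fle_trans with (sub (up e x) A ⊓ interior (sigmaL e) (up e x) y).
    + rewrite (sub_up e_order x (proj1 HA)).
      apply fmeet_mono; [apply fle_refl | apply wayabove_le_interior_up].
    + apply fsup_ub. exists (up e x). split; [apply (up_super_compact e_order) | reflexivity].
  - apply fsup_least; intros a [B [_ ->]].
    apply fle_trans with (sub B A ⊓ B y); [| apply sub_meet_le].
    apply fmeet_mono; [apply fle_refl | apply interior_le].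
Qed.

Lemma sigmaL_T0 x y : eq_on_opens (sigmaL e) (pt_of x) (pt_of y) -> x = y.
Proof.
  intros H. eapply (Lsup_unique e_order); [apply (waybelow_Lsup x) |].
  replace (wb x) with (wb y); [apply waybelow_Lsup |].
  apply functional_extensionality; intros z. symmetry. apply (H (wayabove z)), wayabove_open.
Qed.

Definition point_trace (p : Lset L P -> L) : Lset L P := fun x => p (wayabove x).

Section Point.
Variable p : Lset L P -> L.
Hypothesis p_point : is_point (sigmaL e) p.

Lemma point_decomp (c : P -> L) :
  p (fun y => isup (fun x => c x ⊓ wb y x)) = isup (fun x => c x ⊓ point_trace p x).
Proof.
  transitivity (isup (fun x => p (fun y => c x ⊓ wayabove x y))).
  - apply (point_isup p_point (fun x y => c x ⊓ wayabove x y)).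
    intros x. apply (sigmaL_meet_const e_order), wayabove_open.
  - f_equal. apply functional_extensionality; intros x.
    apply (point_const_meet p_point); [apply (sigmaL_const e_order) | apply wayabove_open].
Qed.

Lemma point_trace_nonempty : Lnonempty (point_trace p).
Proof.
  apply ftop_le_eq. rewrite <- (proj2 (proj2 p_point) top).
  apply fle_trans with (p (fun y => isup (fun x => top ⊓ wb y x))).
  - apply (point_mono p_point); [apply (sigmaL_const e_order) | apply sigmaL_waybelow_join |].
    intros y. apply fle_trans with (isup (wb y)); [rewrite waybelow_nonempty; apply fle_refl |].
    apply isup_mono; intros x. apply fmeet_greatest; [apply ftop_greatest | apply fle_refl].
  - rewrite point_decomp. apply isup_mono; intros x. apply fmeet_r.
Qed.

Lemma point_trace_directed : directed e (point_trace p).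
Proof.
  split; [exact point_trace_nonempty |].
  intros a b. unfold point_trace. rewrite <- (proj1 p_point) by apply wayabove_open.
  apply fle_trans with (p (fun y => isup (fun z => (e a z ⊓ e b z) ⊓ wb y z))).
  - apply (point_mono p_point);
      [apply (sigmaL_meet e_order); apply wayabove_open | apply sigmaL_waybelow_join |].
    intros y; cbv beta. eapply fle_trans; [apply (proj2 (waybelow_directed y) a b) |].
    apply isup_mono; intros z. solve_meet.
  - rewrite point_decomp. apply isup_mono; intros z. solve_meet.
Qed.

Lemma point_eq_pt_of_Lsup x :
  is_Lsup e (point_trace p) x -> eq_on_opens (sigmaL e) p (pt_of x).
Proof.
  intros Hx A HA. unfold pt_of. rewrite (proj2 HA _ _ point_trace_directed Hx).
  transitivity (p (fun y => isup (fun x => A x ⊓ wb y x))); [| apply point_decomp].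
  f_equal. apply functional_extensionality; intros y. apply sigmaL_waybelow_decomp, HA.
Qed.

End Point.

Lemma sigmaL_Lsober : Ldcpo e -> Lsober (sigmaL e).
Proof.
  intros e_dcpo. split; [exact sigmaL_T0 |].
  intros p Hp. destruct (e_dcpo _ (point_trace_directed Hp)) as [x Hx].
  exists x. exact (point_eq_pt_of_Lsup Hp Hx).
Qed.

End ContinuousScottTopology.

Theorem proposition4p2 (L : frame) (P : Type) (e : P -> P -> L) :
  Lorder e -> Lcontinuous e ->
  (is_Ltopology (sigmaL e) /\ locally_super_compact (sigmaL e)) /\
  (Ldcpo e -> Lsober (sigmaL e)).
Proof.
  intros e_order e_continuous. split; [split |].
  - exact (sigmaL_Ltopology e_order).
  - exact (sigmaL_locally_super_compact e_order e_continuous).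
  - exact (sigmaL_Lsober e_order e_continuous).
Qed.
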